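(* Consider a finite set $\mathcal{U}$ of users with traffic demands $T_u>0$ and attenuations $\ell_u>0$, constants $g,N_0,\Gamma>0$ and a total bandwidth $W>0$. Consider minimizing $\sum_{u\in\mathcal{U}}\frac{gN_0\Gamma}{\ell_u}\left(2^{T_u/w_u}-1\right)w_u$ over $w_u>0$ subject to $\sum_{u\in\mathcal{U}}w_u=W$, with Lagrangian $\Lambda=\sum_{u}\frac{gN_0\Gamma}{\ell_u}(2^{T_u/w_u}-1)w_u+\lambda\left(\sum_u w_u-W\right)$. The Lagrange multiplier $\lambda^*$ of a stationary point of $\Lambda$ (i.e. $\partial\Lambda/\partial w_u=0$ for all $u$ and $\partial\Lambda/\partial\lambda=0$) is a solution of $f(\lambda^* )=0$, where $$f(\lambda)=W-\sum_{u\in\mathcal{U}}\frac{T_u\ln 2}{1+W_0\!\left(\frac{1}{e}\left[\frac{\lambda\ell_u}{gN_0\Gamma}-1\right]\right)}$$ is a monotonic function of $\lambda$, and $\lambda^*$ lies in the closed interval $$\left(ze^{z+1}+1\right)\frac{gN_0\Gamma}{\ell_m}\le\lambda^*\le\left(ze^{z+1}+1\right)\frac{gN_0\Gamma}{\ell_M},\qquad z\triangleq\frac{\ln 2}{W}\sum_{u\in\mathcal{U}}T_u-1,$$ where $\ell_m=\max_u\ell_u$ and $\ell_M=\min_u\ell_u$.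
   Context: $W_0$ denotes the principal branch of the real Lambert W function, i.e. for $y\ge -1/e$, $x=W_0(y)$ is the solution $x\ge -1$ of $y=xe^x$. In the paper's terminology, $\ell_m$ is the attenuation of users closest to the base station (''minimum attenuation'', largest gain) and $\ell_M$ that of cell-edge users, with $\ell_m>\ell_M$. *)

From HB Require Import structures.
From mathcomp Require Import all_boot all_order all_algebra.
From mathcomp Require Import all_classical all_reals all_analysis.
Set Implicit Arguments. Unset Strict Implicit. Unset Printing Implicit Defensive.
Import Order.TTheory GRing.Theory Num.Theory.
Local Open Scope classical_set_scope.
Local Open Scope ring_scope.

(* Principal branch of the real Lambert W function: for y >= -1/e,
   W0 y is the (unique) x >= -1 with x * e^x = y.  (Junk value 0 otherwise.) *)
Definition LambertW0 {R : realType} (y : R) : R :=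
  xget 0 [set x : R | -1 <= x /\ x * expR x = y].

Definition upd {U : finType} {R : realType} (w : U -> R) (u : U) (t : R) : U -> R :=
  fun v => if v == u then t else w v.

Definition Lagr {U : finType} {R : realType} (g N0 Gam W : R) (T l : U -> R)
  (w : U -> R) (lam : R) : R :=
  \sum_(u : U) (g * N0 * Gam / l u) * (2 `^ (T u / w u) - 1) * w u
  + lam * (\sum_(u : U) w u - W).

Definition fL {U : finType} {R : realType} (g N0 Gam W : R) (T l : U -> R)
  (lam : R) : R :=
  W - \sum_(u : U) T u * ln 2 /
        (1 + LambertW0 (expR (-1) * (lam * l u / (g * N0 * Gam) - 1))).

From HB Require Import structures.
From mathcomp Require Import all_boot all_order all_algebra.
From mathcomp Require Import all_classical all_reals all_analysis.
From mathcomp Require Import ring lra.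
Set Implicit Arguments. Unset Strict Implicit.
Import Order.TTheory GRing.Theory Num.Theory numFieldNormedType.Exports.
Local Open Scope classical_set_scope.
Local Open Scope ring_scope.

(* With [y_u := T_u ln 2 / w_u - 1], stationarity in [w_u] reads
   [lam = gN0Gam / l_u * (y_u e^(y_u + 1) + 1)], i.e.
   [e^(-1) (lam l_u / gN0Gam - 1) = y_u e^(y_u)], so [y_u] is the value of the
   Lambert function there and [w_u] is the u-th term of the sum in [f]; the
   constraint [sum_u w_u = W] then gives [f lam = 0].  Since [x e^x] increases
   on [[-1, +oo)], so does [W0], whence the monotonicity of [f].  Finally
   [sum_u w_u y_u = z W] makes [z] a weighted mean of the [y_u], so some [y_u]
   lies above [z] and some below; monotonicity of [y e^(y+1)] and
   [l_M <= l_u <= l_m] then yield the two bounds. *)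

Section LambertW0.
Variable R : realType.
Implicit Types a b x y : R.

Lemma ltr_mulr_expR a b : -1 <= a -> a < b -> a * expR a < b * expR b.
Proof.
move=> a1 ab; case: (lerP 0 b) => b0.
  have -> : b * expR b = b * expR (b - a) * expR a by rewrite -mulrA -expRD subrK.
  rewrite ltr_pM2r ?expR_gt0 //.
  apply: (lt_le_trans ab).
  by apply: ler_peMr => //; rewrite -expR0 ler_expR subr_ge0 ltW.
have -> : a * expR a = a * expR (a - b) * expR b by rewrite -mulrA -expRD subrK.
rewrite ltr_pM2r ?expR_gt0 //.
have ab0 : a - b != 0 by rewrite subr_eq0 lt_eqF.
have lt_a : a * expR (a - b) < a * (1 + (a - b)).
  by rewrite ltr_nM2l ?expR_gt1Dx // (lt_trans ab b0).
have : 0 <= (b - a) * (1 + a) by rewrite mulr_ge0 //; lra.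
by lra.
Qed.

Lemma ler_mulr_expR2 a b : -1 <= a -> -1 <= b ->
  (a * expR a <= b * expR b) = (a <= b).
Proof.
move=> a1 b1; apply/idP/idP => [H|].
  by rewrite leNgt; apply/negP => /(ltr_mulr_expR b1); rewrite ltNge H.
by rewrite le_eqVlt => /orP[/eqP -> //|/(ltr_mulr_expR a1)/ltW].
Qed.

Lemma LambertW0_mul_expR x : -1 <= x -> LambertW0 (x * expR x) = x.
Proof.
move=> x1; apply: xget_unique => //= y [y1 Hy].
apply/eqP; rewrite eq_le -(ler_mulr_expR2 y1 x1) -(ler_mulr_expR2 x1 y1).
by rewrite Hy lexx.
Qed.

Lemma mulr_expR_surj y : - expR (-1) <= y -> exists x, -1 <= x /\ x * expR x = y.
Proof.
move=> y1.
have b1 : -1 <= `|y| by apply: le_trans (normr_ge0 _); rewrite lerN10.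
have [||x /[!in_itv] /andP[x1 _] <-] := @IVT R (fun x => x * expR x) (-1) `|y| y b1.
- apply: continuous_subspaceT => x.
  by apply: continuousM => //; exact: continuous_expR.
- have Hy : y <= `|y| * expR `|y|.
    apply: le_trans (ler_norm y) _.
    by rewrite -{1}(mulr1 `|y|) ler_wpM2l // -expR0 ler_expR.
  by rewrite /= mulN1r ge_min y1 /= le_max Hy orbT.
- by exists x.
Qed.

Lemma LambertW0P y : - expR (-1) <= y ->
  -1 <= LambertW0 y /\ LambertW0 y * expR (LambertW0 y) = y.
Proof. by move/mulr_expR_surj => E; apply: (xgetPex 0 E). Qed.

Lemma LambertW0_gtN1 y : - expR (-1) < y -> -1 < LambertW0 y.
Proof.
move=> y1; have [W1 WE] := LambertW0P (ltW y1).
rewrite lt_neqAle W1 andbT; apply/negP => /eqP E.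
by move: y1; rewrite -WE -E mulN1r ltxx.
Qed.

Lemma ler_LambertW0 a b : - expR (-1) <= a -> a <= b -> LambertW0 a <= LambertW0 b.
Proof.
move=> a1 ab; have [A1 AE] := LambertW0P a1.
have [B1 BE] := LambertW0P (le_trans a1 ab).
by rewrite -(ler_mulr_expR2 A1 B1) AE BE.
Qed.

Lemma ler_mulr_expRD1 a b : -1 <= a -> a <= b ->
  a * expR (a + 1) <= b * expR (b + 1).
Proof.
move=> a1 ab; rewrite !expRD !mulrA ler_wpM2r ?expR_ge0 //.
by rewrite ler_mulr_expR2 // (le_trans a1 ab).
Qed.

Lemma mulr_expRD1_ge0 a : -1 <= a -> 0 <= a * expR (a + 1) + 1.
Proof.
by move=> a1; have := ler_mulr_expRD1 (lexx (-1)) a1; rewrite addNr expR0; lra.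
Qed.

End LambertW0.

Section Stationarity.
Variable R : realType.

Lemma is_derive_power_cost (b c T t0 : R) : 0 < b -> 0 < t0 ->
  is_derive t0 1 (fun t => c * ((b `^ (T / t) - 1) * t))
    (c * ((b `^ (T / t0) - 1) - b `^ (T / t0) * ln b * T / t0)).
Proof.
move=> b0 t00; have t0n : t0 != 0 by rewrite gt_eqF.
have hV : is_derive t0 1 (fun t : R => t^-1) ((- t0 ^- 2) *: (1 : R)).
  exact: is_deriveV.
have hexp := is_derive1_comp (is_derive_expR _) (is_deriveZ (T * ln b) hV).
have := is_deriveZ c (is_deriveM (is_deriveB hexp (is_derive_cst (1 : R) t0 1))
  (is_derive_id t0 1)).
have powE x : b `^ x = expR (x * ln b) by rewrite /powR gt_eqF.
have -> : c \*: ((expR \o (T * ln b) \*: (fun t : R => t^-1) - cst 1) * id)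
    = (fun t => c * ((b `^ (T / t) - 1) * t)).
  by apply/funext => t /=; rewrite powE mulrAC.
move=> H; apply: is_derive_eq H _.
have -> : (expR \o (T * ln b) \*: (fun t : R => t^-1) - cst 1) t0
    = expR (T / t0 * ln b) - 1 by rewrite /= mulrAC.
rewrite !powE /= /GRing.scale /= subr0 !mulr1 [T * ln b / t0]mulrAC.
by set e := expR _; field.
Qed.

Variables (U : finType) (g N0 Gam W : R) (T l : U -> R).

Lemma derive1_Lagr_multiplier (w : U -> R) (lam : R) :
  derive1 (fun m => Lagr g N0 Gam W T l w m) lam = \sum_(u : U) w u - W.
Proof.
pose S := \sum_(u : U) g * N0 * Gam / l u * (2 `^ (T u / w u) - 1) * w u.
have -> : (fun m => Lagr g N0 Gam W T l w m)
    = cst S + (@id R) * cst (\sum_(u : U) w u - W) by apply/funext.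
have := is_deriveD (is_derive_cst S lam 1)
  (is_deriveM (is_derive_id lam 1) (is_derive_cst (\sum_(u : U) w u - W) lam 1)).
by move=> H; rewrite derive1E derive_val /= /GRing.scale /= mulr0 !add0r mulr1.
Qed.

Lemma derive1_Lagr_upd (w : U -> R) (lam : R) (u : U) : 0 < w u ->
  derive1 (fun t => Lagr g N0 Gam W T l (upd w u t) lam) (w u) =
  g * N0 * Gam / l u * ((2 `^ (T u / w u) - 1)
    - 2 `^ (T u / w u) * ln 2 * T u / w u) + lam.
Proof.
move=> wu0; set c := g * N0 * Gam.
pose A := \sum_(v | v != u) c / l v * (2 `^ (T v / w v) - 1) * w v.
pose B := \sum_(v | v != u) w v.
have E t : Lagr g N0 Gam W T l (upd w u t) lam =
    c / l u * ((2 `^ (T u / t) - 1) * t) + lam * t + (A + lam * (B - W)).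
  rewrite /Lagr (bigD1 u) //= (bigD1 u (P := xpredT)) //= /upd eqxx.
  rewrite (eq_bigr (fun v => c / l v * (2 `^ (T v / w v) - 1) * w v));
    last by move=> v /negbTE ->.
  by rewrite (eq_bigr w) => [|v /negbTE ->] //; rewrite -/A -/B -/c; ring.
have -> : (fun t => Lagr g N0 Gam W T l (upd w u t) lam) =
    (fun t => c / l u * ((2 `^ (T u / t) - 1) * t)) + lam \*: (@id R)
    + cst (A + lam * (B - W)) by apply/funext => t; exact: E.
have := is_deriveD
  (is_deriveD (is_derive_power_cost (c / l u) (T u) (ltr0Sn _ 1) wu0)
    (is_deriveZ lam (is_derive_id (w u) 1)))
  (is_derive_cst (A + lam * (B - W)) (w u) 1).
by move=> H; rewrite derive1E derive_val /= /GRing.scale /= mulr1 addr0.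
Qed.

End Stationarity.

Section Multiplier.
Variables (R : realType) (c lu Tu wu lam : R).
Hypothesis stationary :
  c / lu * ((2 `^ (Tu / wu) - 1) - 2 `^ (Tu / wu) * ln 2 * Tu / wu) + lam = 0.

Let y := Tu * ln 2 / wu - 1.

Lemma stationary_multiplierE : lam = c / lu * (y * expR (y + 1) + 1).
Proof.
have yE : y + 1 = Tu * ln 2 / wu by rewrite subrK.
move: stationary; rewrite /powR pnatr_eq0 /= (mulrAC Tu) -yE.
have -> : expR (y + 1) * ln 2 * Tu / wu = expR (y + 1) * (y + 1).
  by rewrite yE -!mulrA; congr (_ * _); exact: mulrCA.
by move=> H; apply/eqP; rewrite -subr_eq0 -H; apply/eqP; ring.
Qed.

Lemma stationary_LambertW0 : 0 < c -> 0 < lu -> 0 < Tu -> 0 < wu ->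
  LambertW0 (expR (-1) * (lam * lu / c - 1)) = Tu * ln 2 / wu - 1.
Proof.
move=> c0 lu0 Tu0 wu0.
have y1 : -1 <= y.
  suff : 0 < Tu * ln 2 / wu by rewrite /y; lra.
  by rewrite !mulr_gt0 ?invr_gt0 // ln_gt0 // ltr1n.
have -> : expR (-1) * (lam * lu / c - 1) = y * expR y.
  rewrite stationary_multiplierE expRD.
  have e : expR (-1) * expR 1 = 1 :> R by rewrite -expRD addNr expR0.
  by field: e; rewrite !gt_eqF.
exact: LambertW0_mul_expR.
Qed.

Lemma stationary_allocationE : 0 < c -> 0 < lu -> 0 < Tu -> 0 < wu ->
  Tu * ln 2 / (1 + LambertW0 (expR (-1) * (lam * lu / c - 1))) = wu.
Proof.
move=> c0 lu0 Tu0 wu0; have ln20 : 0 < ln (2 : R) by rewrite ln_gt0 // ltr1n.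
rewrite stationary_LambertW0 // addrC subrK invf_div mulrCA divff ?mulr1 //.
by rewrite gt_eqF // mulr_gt0.
Qed.

End Multiplier.

Lemma fL_nondecreasing (R : realType) (U : finType) (g N0 Gam W : R)
  (T l : U -> R) :
  0 < g * N0 * Gam -> (forall u, 0 < T u) -> (forall u, 0 < l u) ->
  forall x y, 0 < x -> x <= y -> fL g N0 Gam W T l x <= fL g N0 Gam W T l y.
Proof.
move=> c0 T0 l0 x x' x0 xx'; rewrite /fL lerD2l lerN2; apply: ler_sum => u _.
set c := g * N0 * Gam in c0 *.
set a := expR (-1) * (x * l u / c - 1); set b := expR (-1) * (x' * l u / c - 1).
have ha : - expR (-1) < a.
  have : 0 < expR (-1) * (x * l u / c) by rewrite !mulr_gt0 ?expR_gt0 ?invr_gt0.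
  by rewrite /a mulrBr mulr1; lra.
have ab : a <= b.
  rewrite ler_wpM2l ?expR_ge0 // lerD2r ler_wpM2r ?invr_ge0 ?(ltW c0) //.
  by rewrite ler_wpM2r ?(ltW (l0 u)).
have Wab := ler_LambertW0 (ltW ha) ab.
have Da : 0 < 1 + LambertW0 a by rewrite -ltrBlDl sub0r LambertW0_gtN1.
have Db : 0 < 1 + LambertW0 b by apply: lt_le_trans Da _; rewrite lerD2l.
rewrite ler_pM2l ?mulr_gt0 ?ln_gt0 ?ltr1n // lef_pV2 ?posrE //.
by rewrite lerD2l.
Qed.

Section WeightedMean.
Variables (R : realType) (U : finType) (w : U -> R) (u0 : U).
Hypothesis w0 : forall u, 0 < w u.

Lemma exists_ge_weighted_mean (y : U -> R) (z : R) :
  \sum_(u : U) w u * y u = z * \sum_(u : U) w u -> exists u, z <= y u.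
Proof.
move=> mean; apply: contrapT => /forallNP lt_yz.
suff : \sum_(u : U) w u * y u < \sum_(u : U) z * w u.
  by rewrite -mulr_sumr mean ltxx.
apply: ltr_sum => [|u _]; first by apply/hasP; exists u0; rewrite ?mem_index_enum.
by rewrite mulrC ltr_pM2r // ltNge; apply/negP/lt_yz.
Qed.

Lemma exists_le_weighted_mean (y : U -> R) (z : R) :
  \sum_(u : U) w u * y u = z * \sum_(u : U) w u -> exists u, y u <= z.
Proof.
move=> mean.
have [|u] := @exists_ge_weighted_mean (fun u => - y u) (- z).
  rewrite (eq_bigr (fun u => - (w u * y u))) ?sumrN ?mean ?mulNr //.
  by move=> u _; rewrite mulrN.
by rewrite lerN2; exists u.
Qed.

End WeightedMean.

Theorem lemma1 (R : realType) (U : finType) (g N0 Gam W : R) (T l : U -> R)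
  (lm lM : R) (w : U -> R) (lam : R) :
  0 < g -> 0 < N0 -> 0 < Gam -> 0 < W ->
  (forall u, 0 < T u) -> (forall u, 0 < l u) ->
  (* lm = max_u l_u, lM = min_u l_u *)
  (exists u, l u = lm) -> (forall u, l u <= lm) ->
  (exists u, l u = lM) -> (forall u, lM <= l u) ->
  (* (w, lam) is a stationary point of the Lagrangian with w_u > 0 *)
  (forall u, 0 < w u) ->
  (forall u, derive1 (fun t => Lagr g N0 Gam W T l (upd w u t) lam) (w u) = 0) ->
  derive1 (fun m => Lagr g N0 Gam W T l w m) lam = 0 ->
  let z := ln 2 / W * (\sum_(u : U) T u) - 1 in
  fL g N0 Gam W T l lam = 0 /\
  ((forall x y, 0 < x -> x <= y -> fL g N0 Gam W T l x <= fL g N0 Gam W T l y) \/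
   (forall x y, 0 < x -> x <= y -> fL g N0 Gam W T l y <= fL g N0 Gam W T l x)) /\
  (z * expR (z + 1) + 1) * (g * N0 * Gam / lm) <= lam /\
  lam <= (z * expR (z + 1) + 1) * (g * N0 * Gam / lM).
Proof.
move=> g0 N00 Gam0 W0 T0 l0 [um <-] lm_max [uM <-] lM_min w0 Dw Dlam z.
have c0 : 0 < g * N0 * Gam by rewrite !mulr_gt0.
set c := g * N0 * Gam in c0 *.
have sumw : \sum_(u : U) w u = W.
  apply/eqP; rewrite -subr_eq0.
  by rewrite -(derive1_Lagr_multiplier g N0 Gam W T l w lam) Dlam.
have stat u := etrans (esym (derive1_Lagr_upd g N0 Gam W T l lam (w0 u))) (Dw u).
have lamE u := stationary_multiplierE (stat u).
pose y u := T u * ln 2 / w u - 1.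
have y1 u : -1 <= y u.
  have : 0 < T u * ln 2 / w u by rewrite !mulr_gt0 ?invr_gt0 ?ln_gt0 ?ltr1n.
  by rewrite /y; lra.
have z1 : -1 <= z.
  suff : 0 < ln 2 / W * \sum_(u : U) T u by rewrite /z; lra.
  rewrite !mulr_gt0 ?invr_gt0 ?ln_gt0 ?ltr1n //.
  by rewrite (bigD1 um) //= ltr_wpDr ?T0 // sumr_ge0 // => u _; rewrite ltW.
have mean : \sum_(u : U) w u * y u = z * \sum_(u : U) w u.
  rewrite sumw (eq_bigr (fun u => T u * ln 2 - w u)) => [|u _]; last first.
    by rewrite /y mulrBr mulr1 mulrC divfK // gt_eqF.
  rewrite sumrB sumw -mulr_suml /z mulrBl mul1r mulrAC divfK ?gt_eqF //.
  by rewrite mulrC.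
split.
  rewrite /fL -/c (eq_bigr w) ?sumw ?subrr // => u _.
  exact: stationary_allocationE (stat u) c0 (l0 u) (T0 u) (w0 u).
split; first by left; exact: fL_nondecreasing.
split.
- have [u zy] := exists_ge_weighted_mean um w0 mean; rewrite (lamE u) mulrC.
  apply: ler_pM; first exact/ltW/divr_gt0.
  + exact: mulr_expRD1_ge0.
  + by rewrite ler_pM2l // lef_pV2 ?posrE.
  + by rewrite lerD2r ler_mulr_expRD1.
- have [u yz] := exists_le_weighted_mean um w0 mean; rewrite (lamE u) mulrC.
  apply: ler_pM; first exact: mulr_expRD1_ge0 (y1 u).
  + exact/ltW/divr_gt0.
  + by rewrite lerD2r ler_mulr_expRD1 ?y1.
  + by rewrite ler_pM2l // lef_pV2 ?posrE.
Qed.
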